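(* For each $n\in\mathbb{Z}^+$, let $\mathsf{A}^{(n)}$ be a strictly lower-triangular $n\times n$ real matrix with entries $a^{(n)}_{i,j}$ and $\mathbf{v}^{(n)}$ an $n$-dimensional real row vector with entries $v^{(n)}_i$. Assume that $|a^{(n)}_{i,j}|^2\leq np$ for all $i,j,n$, for some real $p>0$, and that \[ \liminf_{n\to\infty}-\frac{1}{2n}\log\big\|\mathbf{v}^{(n)}(\mathsf{I}+\mathsf{A}^{(n)})\big\|^2\geq\Gamma \] for some real $\Gamma>0$. Then for each $\epsilon\in(0,\Gamma)$ and all sufficiently large $n$ the following holds: if $|v^{(n)}_j|>e^{-n(\Gamma-\epsilon)}$ for some index $j\in\{1,\ldots,n\}$, then there exists an index $i\in\{j+1,\ldots,n\}$ with \[ |v^{(n)}_i|\geq\frac{|v^{(n)}_j|-e^{-n(\Gamma-\epsilon)}}{n^{3/2}\sqrt{p}}. \] If moreover $\|\mathbf{v}^{(n)}\|=1$ for all $n$, then the cardinality of the set $\mathcal{S}^{(n)}:=\{j\in\{1,\ldots,n\}:|v^{(n)}_j|>n^{-2\log n}\}$ is unbounded in $n$.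
   Context: $\mathsf{I}$ denotes the identity matrix, $\|\cdot\|$ the Euclidean norm, and $\log$ the natural logarithm. *)

From HB Require Import structures.
From mathcomp Require Import all_boot all_order all_algebra.
From mathcomp Require Import all_classical all_reals all_analysis.
Set Implicit Arguments. Unset Strict Implicit. Unset Printing Implicit Defensive.
Import Order.TTheory GRing.Theory Num.Theory.
Local Open Scope ring_scope.

Definition sqnorm (R : realType) (n : nat) (x : 'rV[R]_n) : R :=
  \sum_(i < n) x ord0 i ^+ 2.

Definition enorm (R : realType) (n : nat) (x : 'rV[R]_n) : R :=
  Num.sqrt (sqnorm x).

Definition strictly_lower (R : realType) (n : nat) (A : 'M[R]_n) : Prop :=
  forall i j : 'I_n, (i <= j)%N -> A i j = 0.

(* -(1/(2n)) log s, as an extended real; log 0 = -oo so the value is +oo when s = 0. *)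
Definition neglog_rate (R : realType) (n : nat) (s : R) : \bar R :=
  if s == 0 then +oo%E else ((- ln s) / (2 * n%:R))%:E.

(* Write w = v (I + A).  Because A is strictly lower triangular,
   v_j = w_j - sum_{k > j} v_k a_{kj}, and |a_{kj}| <= sqrt(n p); the liminf
   hypothesis gives ||w|| <= e^{-n(Gamma - eps)} for large n.  Hence a coordinate
   v_j above that threshold forces a later coordinate of size at least
   (|v_j| - e^{-n(Gamma - eps)}) / (n^{3/2} sqrt p).
   For a unit vector some coordinate is at least 1/n.  Applying the previous step
   M times, each time losing a factor at most n^3, yields M + 1 distinct
   coordinates above n^{-(3M+1)}, which exceeds n^{-2 log n} once n is large,
   while the threshold e^{-n(Gamma - eps)} is then negligible. *)

From mathcomp Require Import all_boot all_order all_algebra.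
From mathcomp Require Import all_classical all_reals all_analysis.
From mathcomp Require Import lra.
Set Implicit Arguments. Unset Strict Implicit. Unset Printing Implicit Defensive.
Import Order.TTheory GRing.Theory Num.Theory.
Local Open Scope ring_scope.

Section Norms.
Variable R : realType.

Lemma sqnorm_ge0 n (x : 'rV[R]_n) : 0 <= sqnorm x.
Proof. by apply: sumr_ge0 => i _; exact: sqr_ge0. Qed.

Lemma normr_coord_le_enorm n (x : 'rV[R]_n) (j : 'I_n) : `|x ord0 j| <= enorm x.
Proof.
rewrite -sqrtr_sqr ler_wsqrtr // /sqnorm (bigD1 j) //= lerDl.
by apply: sumr_ge0 => i _; exact: sqr_ge0.
Qed.

Lemma exists_normr_coord_ge_invn n (x : 'rV[R]_n) :
  (0 < n)%N -> enorm x = 1 -> exists j : 'I_n, n%:R^-1 <= `|x ord0 j|.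
Proof.
move=> n0 x1; apply: contrapT => small.
have lt_inv j : `|x ord0 j| < n%:R^-1.
  by rewrite ltNge; apply/negP => ?; apply: small; exists j.
have : sqnorm x < n%:R^-1 ^+ 2 *+ n.
  rewrite /sqnorm -[n in _ *+ n]card_ord -sumr_const.
  apply: ltr_sum => [|j _]; first by apply/hasP; exists (Ordinal n0); rewrite ?mem_index_enum.
  by rewrite -real_normK ?num_real // ltr_pXn2r ?nnegrE ?invr_ge0.
have -> : sqnorm x = 1 by rewrite -[LHS]sqr_sqrtr ?sqnorm_ge0 // -/(enorm x) x1 expr1n.
rewrite -mulr_natr expr2 -mulrA mulVf ?pnatr_eq0 -?lt0n // mulr1.
by rewrite invf_gt1 ?ltr0n // ltNge ler1n n0.
Qed.

Lemma neglog_rate_gt_sqrt_le n (c s : R) : (0 < n)%N -> 0 <= s ->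
  (c%:E < neglog_rate n s)%E -> Num.sqrt s <= expR (- (n%:R * c)).
Proof.
move=> n0 s0; rewrite /neglog_rate; case: eqP => [-> _|/eqP s_neq0].
  by rewrite sqrtr0 expR_ge0.
have s_gt0 : 0 < s by rewrite lt_neqAle eq_sym s_neq0.
rewrite lte_fin ltr_pdivlMr ?mulr_gt0 ?ltr0n // => lt_c.
rewrite -[Num.sqrt s]lnK ?posrE ?sqrtr_gt0 // ler_expR.
have -> : ln (Num.sqrt s) = ln s / 2.
  by rewrite -powR12_sqrt // ln_powR mulrC.
lra.
Qed.

End Norms.

Section StrictlyLower.
Variables (R : realType) (n : nat) (A : 'M[R]_n).
Hypothesis lowA : strictly_lower A.

Lemma strictly_lower_propagation (v : 'rV[R]_n) (s E : R) (j : 'I_n) :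
  0 < s -> (forall i k, `|A i k| <= s) ->
  enorm (v *m (1%:M + A)) <= E -> E < `|v ord0 j| ->
  exists i : 'I_n, (j < i)%N /\ (`|v ord0 j| - E) / (n%:R * s) <= `|v ord0 i|.
Proof.
move=> s0 As wE Ej; set w := v *m (1%:M + A).
have n0 : (0 < n)%N by apply: leq_ltn_trans (ltn_ord j).
set X := (`|v ord0 j| - E) / (n%:R * s).
have X0 : 0 < X by rewrite divr_gt0 ?subr_gt0 ?mulr_gt0 ?ltr0n.
apply: contrapT => no_large.
have term_lt k : `|v ord0 k * A k j| < X * s.
  have [jk|kj] := ltnP j k; last by rewrite lowA // mulr0 normr0 mulr_gt0.
  have vk : `|v ord0 k| < X by rewrite ltNge; apply/negP => ?; apply: no_large; exists k.
  by rewrite normrM; apply: le_lt_trans (ler_wpM2l _ (As k j)) _; rewrite ?ltr_pM2r.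
have sum_lt : `|\sum_k v ord0 k * A k j| < `|v ord0 j| - E.
  have -> : `|v ord0 j| - E = X * s *+ n.
    by rewrite -mulr_natr /X -mulrA [s * _]mulrC divfK // gt_eqF ?mulr_gt0 ?ltr0n.
  apply: le_lt_trans (ler_norm_sum _ _ _) _; rewrite -[n in _ *+ n]card_ord -sumr_const.
  by apply: ltr_sum => [|k _]; first by apply/hasP; exists (Ordinal n0); rewrite ?mem_index_enum.
have wj : w ord0 j = v ord0 j + \sum_k v ord0 k * A k j by rewrite /w mulmxDr mulmx1 !mxE.
have : `|v ord0 j| <= `|w ord0 j| + `|\sum_k v ord0 k * A k j|.
  by rewrite wj -{1}[v ord0 j](addrK (\sum_k v ord0 k * A k j)) ler_normB.
have := le_trans (normr_coord_le_enorm w j) wE; lra.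
Qed.

End StrictlyLower.

Lemma card_gt_of_propagation (R : realType) n (a : 'I_n -> R) (E D B c T : R) (M : nat) :
  0 < E -> 0 < D -> 1 <= B -> 2 * D <= B ->
  (forall j, E < a j -> exists i : 'I_n, (j < i)%N /\ (a j - E) / D <= a i) ->
  2 * E <= c / B ^+ M -> T < c / B ^+ M -> (exists j, c <= a j) ->
  (M < #|[set j | (T < a j)%R]|)%N.
Proof.
move=> E0 D0 B1 DB step EM TM [j0 cj0].
pose th k := c / B ^+ k.
rewrite -/(th M) in EM TM.
have B0 : 0 < B by apply: lt_le_trans B1.
have c0 : 0 < c.
  have : 0 < c / B ^+ M by apply: lt_le_trans EM; rewrite mulr_gt0.
  by rewrite pmulr_lgt0 // invr_gt0 exprn_gt0.
have th_ge k : (k <= M)%N -> th M <= th k.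
  by move=> kM; rewrite ler_pM2l // lef_pV2 ?posrE ?exprn_gt0 // ler_weXn2l.
(* One step costs at most a factor [B]: [E <= a j / 2] and [2 D <= B]. *)
have th_step j k : (k <= M)%N -> th k <= a j -> th k.+1 <= (a j - E) / D.
  move=> kM thj; have := th_ge k kM.
  have -> : th k.+1 = th k / B by rewrite /th exprSr invfM mulrA.
  have thk0 : 0 < th k by rewrite divr_gt0 ?exprn_gt0.
  move=> thM; apply: (le_trans (y := th k / (2 * D))).
    by rewrite ler_pM2l // lef_pV2 ?posrE ?mulr_gt0.
  rewrite invfM mulrA ler_pM2r ?invr_gt0 //; lra.
have chain k : (k <= M)%N -> exists j : 'I_n, th k <= a j /\
    (k < #|[set i : 'I_n | (i <= j)%N && (T < a i)%R]|)%N.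
  elim: k => [|k IH] kM.
    exists j0; split; first by rewrite /th expr0 divr1.
    apply/card_gt0P; exists j0; rewrite inE leqnn /=.
    by apply: (lt_le_trans TM); apply: le_trans (th_ge 0%N kM) _; rewrite /th expr0 divr1.
  have [j [thj cardj]] := IH (ltnW kM).
  have Ej : E < a j by have := th_ge k (ltnW kM); lra.
  have [i [ji ai]] := step j Ej.
  have thi : th k.+1 <= a i := le_trans (th_step j k (ltnW kM) thj) ai.
  exists i; split => //.
  apply: leq_ltn_trans cardj _; apply: proper_card; apply/properP; split.
    by apply/fintype.subsetP => x; rewrite !inE => /andP[xj ->]; rewrite (leq_trans xj (ltnW ji)).
  exists i; first by rewrite inE leqnn /=; apply: lt_le_trans TM (le_trans (th_ge _ kM) thi).
  by rewrite inE negb_and -ltnNge ji.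
have [j [_ cardj]] := chain M (leqnn M).
apply: leq_trans cardj _; apply: subset_leq_card.
by apply/fintype.subsetP => i; rewrite !inE => /andP[].
Qed.

Section Asymptotics.
Variable R : realType.
Local Open Scope classical_set_scope.

Lemma limn_einf_gt_near (u : (\bar R)^nat) (l : \bar R) :
  (l < limn_einf u)%E -> \forall n \near \oo, (l < u n)%E.
Proof.
rewrite limn_einf_lim (cvg_lim _ (@cvg_einfs_sup _ u)) //.
move=> /ereal_sup_gt [_ [N _ <-]] lN; exists N => // n /= Nn.
by apply: lt_le_trans lN _; apply: ereal_inf_lbound; exists n.
Qed.

Lemma powR_3half (x : R) : 0 <= x -> x `^ (3 / 2) = x * Num.sqrt x.
Proof.
move=> x0; have [->|x_neq0] := eqVneq x 0; first by rewrite powR0 ?mul0r.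
have -> : (3 / 2 : R) = 1 + 2^-1 by lra.
by rewrite powRD ?x_neq0 ?implybT // powRr1 // powR12_sqrt.
Qed.

Lemma near_expRN_le_invXn (c : R) (k : nat) : 0 < c ->
  \forall n \near \oo, 2 * expR (- (n%:R * c)) <= (n%:R ^+ k)^-1.
Proof.
move=> c0; pose r := 2 * (k.+1)`!%:R / c ^+ k.+1.
have r0 : 0 < r by rewrite divr_gt0 ?mulr_gt0 ?ltr0n ?fact_gt0 ?exprn_gt0.
near=> n.
have rn : r <= n%:R by near: n; exact: nbhs_infty_ger.
have n0 : 0 < n%:R :> R by apply: lt_le_trans rn.
have nk0 : 0 < n%:R ^+ k :> R by rewrite exprn_gt0.
have two_le : 2 * n%:R ^+ k <= expR (n%:R * c).
  apply: le_trans (expR_ge1Dxn k (ltW (mulr_gt0 n0 c0))).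
  have -> : (n%:R * c) ^+ k.+1 / (k.+1)`!%:R = n%:R ^+ k * (n%:R * c ^+ k.+1 / (k.+1)`!%:R).
    by rewrite exprMn exprS !mulrA [n%:R ^+ k * _]mulrC.
  rewrite mulrC; apply: ler_wpDl => //; apply: ler_wpM2l; first exact: ltW.
  rewrite ler_pdivlMr ?ltr0n ?fact_gt0 // -ler_pdivrMr ?exprn_gt0 //.
rewrite expRN ler_pdivrMr ?expR_gt0 // mulrC ler_pdivlMr //.
Unshelve. all: by end_near.
Qed.

Lemma near_powR_ln_lt_invXn (k : nat) :
  \forall n \near \oo, n%:R `^ (- (2 * ln (n%:R : R))) < (n%:R ^+ k)^-1.
Proof.
near=> n.
have kn : expR k%:R + 1 <= n%:R :> R by near: n; exact: nbhs_infty_ger.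
have n0 : 0 < n%:R :> R by apply: lt_le_trans kn; rewrite addr_gt0 ?expR_gt0.
have k_lt : k%:R < ln (n%:R : R).
  by rewrite -ltr_expR lnK ?posrE //; apply: lt_le_trans kn; rewrite ltrDl.
have ln0 : 0 < ln (n%:R : R) by apply: le_lt_trans k_lt.
rewrite /powR gt_eqF // -[n%:R ^+ k]lnK ?posrE ?exprn_gt0 // -expRN lnXn //.
rewrite ltr_expR; nra.
Unshelve. all: by end_near.
Qed.

Lemma near_powR_3half_sqrt_le (p : R) : 0 <= p ->
  \forall n \near \oo, 2 * (n%:R `^ (3 / 2) * Num.sqrt p) <= n%:R ^+ 3.
Proof.
move=> p0; near=> n.
have pn : p <= n%:R by near: n; exact: nbhs_infty_ger.
have n2 : 2 <= n%:R :> R by near: n; exact: nbhs_infty_ger.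
have sqrt_le : Num.sqrt (n%:R * p) <= n%:R.
  by rewrite -[X in _ <= X]ger0_norm ?ler0n // -sqrtr_sqr ler_wsqrtr // expr2 ler_wpM2l.
rewrite powR_3half ?ler0n // -mulrA -sqrtrM ?ler0n //.
have := sqrtr_ge0 (n%:R * p); nra.
Unshelve. all: by end_near.
Qed.

End Asymptotics.

Section LowerTriangularSequences.
Variable R : realType.

Definition propagates (v : forall n : nat, 'rV[R]_n) (p c : R) : Prop :=
  exists N : nat, forall n : nat, (N <= n)%N ->
    forall j : 'I_n, `|v n ord0 j| > expR (- (n%:R * c)) ->
      exists i : 'I_n, (j < i)%N /\
        `|v n ord0 i| >= (`|v n ord0 j| - expR (- (n%:R * c)))
                          / (n%:R `^ (3 / 2) * Num.sqrt p).

Lemma liminf_propagates (A : forall n : nat, 'M[R]_n)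
    (v : forall n : nat, 'rV[R]_n) (p c : R) :
  (forall n, strictly_lower (A n)) -> 0 < p ->
  (forall n (i j : 'I_n), `|A n i j| ^+ 2 <= n%:R * p) ->
  (c%:E < limn_einf (fun n => neglog_rate n (sqnorm (v n *m (1%:M + A n)))))%E ->
  propagates v p c.
Proof.
move=> lowA p0 Ab /limn_einf_gt_near[N _ rate_gt].
exists N => n Nn j vj.
have n0 : (0 < n)%N by apply: leq_ltn_trans (ltn_ord j).
rewrite powR_3half ?ler0n // -mulrA -sqrtrM ?ler0n //.
apply: strictly_lower_propagation vj => //.
- by rewrite sqrtr_gt0 mulr_gt0 ?ltr0n.
- by move=> i k; rewrite -sqrtr_sqr ler_wsqrtr // -real_normK ?num_real.
- exact: neglog_rate_gt_sqrt_le (sqnorm_ge0 _) (rate_gt n Nn).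
Qed.

Lemma propagates_card_unbounded (v : forall n : nat, 'rV[R]_n) (p c : R) :
  0 < p -> 0 < c -> propagates v p c ->
  (forall n : nat, (0 < n)%N -> enorm (v n) = 1) ->
  forall M : nat, exists n : nat, (0 < n)%N /\
    (M < #|[set j : 'I_n | (`|v n ord0 j| > n%:R `^ (- (2 * ln (n%:R : R))))%R]|)%N.
Proof.
move=> p0 c0 [N later] unit M.
pose k := (3 * M).+1.
have [n [Nn n1 small_E small_T D_le]] : exists n, [/\ (N <= n)%N, 1 <= n%:R :> R,
    2 * expR (- (n%:R * c)) <= (n%:R ^+ k)^-1,
    n%:R `^ (- (2 * ln (n%:R : R))) < (n%:R ^+ k)^-1 &
    2 * (n%:R `^ (3 / 2) * Num.sqrt p) <= n%:R ^+ 3].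
  apply: (@filter_ex _ \oo%classic _); near=> n; split; near: n.
  - exact: nbhs_infty_ge.
  - exact: nbhs_infty_ger.
  - exact: near_expRN_le_invXn.
  - exact: near_powR_ln_lt_invXn.
  - exact: near_powR_3half_sqrt_le (ltW p0).
have n0 : (0 < n)%N by rewrite -(ltr_nat R); apply: lt_le_trans n1.
have thresholdE : n%:R^-1 / (n%:R ^+ 3) ^+ M = (n%:R ^+ k)^-1 :> R.
  by rewrite -exprM -invfM -exprS.
exists n; split => //.
apply: (card_gt_of_propagation (a := fun j => `|v n ord0 j|) (c := n%:R^-1)
  (expR_gt0 (- (n%:R * c))) _ _ D_le).
- by rewrite mulr_gt0 ?powR_gt0 ?sqrtr_gt0 ?ltr0n.
- exact: exprn_ege1.
- exact: later.
- by rewrite thresholdE.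
- by rewrite thresholdE.
- exact: exists_normr_coord_ge_invn n0 (unit n n0).
Unshelve. all: by end_near.
Qed.

End LowerTriangularSequences.

Theorem lemma3 (R : realType) (A : forall n : nat, 'M[R]_n)
  (v : forall n : nat, 'rV[R]_n) (p Gamma : R) :
  (forall n, strictly_lower (A n)) ->
  0 < p ->
  (forall n (i j : 'I_n), `|A n i j| ^+ 2 <= n%:R * p) ->
  0 < Gamma ->
  (Gamma%:E <= limn_einf (fun n => neglog_rate n (sqnorm (v n *m (1%:M + A n)))))%E ->
  (forall eps : R, 0 < eps < Gamma ->
     exists N : nat, forall n : nat, (N <= n)%N ->
       forall j : 'I_n, `|v n ord0 j| > expR (- (n%:R * (Gamma - eps))) ->
         exists i : 'I_n, (j < i)%N /\
           `|v n ord0 i| >= (`|v n ord0 j| - expR (- (n%:R * (Gamma - eps))))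
                             / (n%:R `^ (3 / 2) * Num.sqrt p))
  /\
  ((forall n : nat, (0 < n)%N -> enorm (v n) = 1) ->
     forall M : nat, exists n : nat, (0 < n)%N /\
       (M < #|[set j : 'I_n | (`|v n ord0 j| > n%:R `^ (- (2 * ln (n%:R : R))))%R]|)%N).
Proof.
move=> lowA p0 Ab Gamma0 liminf_ge.
have prop c : c < Gamma -> propagates v p c.
  move=> cG; apply: liminf_propagates lowA p0 Ab _.
  by apply: lt_le_trans liminf_ge; rewrite lte_fin.
split=> [eps /andP[eps0 epsG]|unit]; first by apply: prop; lra.
by apply: propagates_card_unbounded p0 _ (prop (Gamma / 2) _) unit; lra.
Qed.
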